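(* Let $n$ be a positive integer, $q=2^n$, $k$ an integer with $1\le k\le n-1$, and $d=\gcd(n,k)$. For $\alpha,\beta,\gamma\in\mathbb{F}_q$ define $$S(\alpha,\beta,\gamma)=\sum_{x\in\mathbb{F}_q}(-1)^{\mathrm{Tr}_1^n\left(\alpha x^{2^{2k}+1}+\beta x^{2^k+1}+\gamma x\right)}.$$ Then $$\sum_{\alpha,\beta,\gamma\in\mathbb{F}_q}S(\alpha,\beta,\gamma)^3=(2^{n+d}+2^n-2^d)\cdot 2^{3n}.$$ Equivalently, the number of triples $(x,y,z)\in\mathbb{F}_q^3$ with $x+y+z=0$, $x^{2^k+1}+y^{2^k+1}+z^{2^k+1}=0$ and $x^{2^{2k}+1}+y^{2^{2k}+1}+z^{2^{2k}+1}=0$ equals $2^{n+d}+2^n-2^d$.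
   Context: $\mathrm{Tr}_1^n:\mathbb{F}_{2^n}\to\mathbb{F}_2$ is the absolute trace $x\mapsto\sum_{i=0}^{n-1}x^{2^i}$. *)

From HB Require Import structures.
From mathcomp Require Import all_boot all_order all_algebra all_field.
Set Implicit Arguments. Unset Strict Implicit. Unset Printing Implicit Defensive.
Import GRing.Theory.
Local Open Scope ring_scope.

(* Absolute trace Tr_1^n x = \sum_{i<n} x^(2^i), valued in F (lands in {0,1}
   when #|F| = 2^n). *)
Definition absTr (F : finFieldType) (n : nat) (x : F) : F :=
  \sum_(i < n) x ^+ (2 ^ i)%N.

(* (-1)^(t) for t in F_2 = {0,1} embedded in F, as an integer. *)
Definition sgnF (F : finFieldType) (t : F) : int := if t == 0 then 1 else -1.

Definition Sab (F : finFieldType) (n k : nat) (a b c : F) : int :=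
  \sum_(x : F) sgnF (absTr n (a * x ^+ (2 ^ (2 * k) + 1)%N
                             + b * x ^+ (2 ^ k + 1)%N + c * x)).

From HB Require Import structures.
From mathcomp Require Import all_boot all_order all_algebra all_field.
From mathcomp Require Import ring.
Set Implicit Arguments. Unset Strict Implicit. Unset Printing Implicit Defensive.
Import GRing.Theory.
Local Open Scope ring_scope.

(* Let chi(x) = (-1)^Tr(x).  Since F has characteristic 2, x |-> x^(2^e)
   is additive, so Tr is additive and Tr(x)^2 = Tr(x): chi is an additive
   character, nontrivial because the trace polynomial has degree 2^(n-1) < q.
   Hence sum_c chi(c x) = q [x = 0].  Expanding S^3 and summing over a, b, c
   first gives  sum S^3 = q^3 N,  where N counts the triples with x + y + z = 0
   and x^(2^e+1) + y^(2^e+1) + z^(2^e+1) = 0 for e = k, 2k.  Substituting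
   z = x + y turns these power sums into the polar forms x^(2^e) y + y^(2^e) x;
   on the line y = t x (x <> 0) both vanish iff t^(2^k) = t, i.e. t^(2^d) = t
   (Bezout), and X^(2^d) - X, a divisor of X^q - X = prod_x (X - x), has exactly
   2^d roots.  So N = q + (q - 1) 2^d = 2^(n+d) + 2^n - 2^d. *)

Section CharTwo.
Variable R : comNzRingType.
Hypothesis ch2 : 2 \in [pchar R].

Lemma frobD (e : nat) (x y : R) : (x + y) ^+ (2 ^ e) = x ^+ (2 ^ e) + y ^+ (2 ^ e).
Proof. by apply: exprDn_pchar; rewrite pnatX pnatE // ch2. Qed.

Lemma frob_sum (I : finType) (G : I -> R) e :
  (\sum_i G i) ^+ (2 ^ e) = \sum_i G i ^+ (2 ^ e).
Proof. by apply: (big_morph (fun x => x ^+ (2 ^ e)) (frobD e)); rewrite expr0n expn_eq0. Qed.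

Definition power_sum (e : nat) (x y z : R) : R :=
  x ^+ (2 ^ e + 1) + y ^+ (2 ^ e + 1) + z ^+ (2 ^ e + 1).

Definition polar (e : nat) (x y : R) : R := x ^+ (2 ^ e) * y + y ^+ (2 ^ e) * x.

Lemma power_sum_polar e (x y : R) : power_sum e x y (x + y) = polar e x y.
Proof.
rewrite /power_sum !addn1 !exprSr frobD mulrDl !mulrDr.
rewrite (AC (2*(2*2)) ((1*3)*(2*6)*(4*5))) /=.
by rewrite !(addrr_pchar2 ch2) !add0r.
Qed.

End CharTwo.

Lemma sum_triple (T : finType) (V : nmodType) (G : T -> T -> T -> V) :
  \sum_a \sum_b \sum_c G a b c = \sum_(p : T * (T * T)) G p.1 p.2.1 p.2.2.
Proof. by under eq_bigr do rewrite pair_big; rewrite pair_big. Qed.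

Lemma exchange_triple_sums (T : finType) (V : nmodType)
    (G : T -> T -> T -> T -> T -> T -> V) :
  \sum_a \sum_b \sum_c \sum_x \sum_y \sum_z G a b c x y z =
  \sum_x \sum_y \sum_z \sum_a \sum_b \sum_c G a b c x y z.
Proof.
rewrite sum_triple; under eq_bigr do rewrite sum_triple.
by rewrite exchange_big /= [RHS]sum_triple; apply: eq_bigr => p _; rewrite sum_triple.
Qed.

Section FrobeniusPolynomial.
Variable F : fieldType.
Hypothesis ch2 : 2 \in [pchar F].

(* X^(2^d) - X divides X^(2^m) - X when d | m, by the telescoping identity
   X^(2^(j+1)d) + X = (X^(2^d) + X)^(2^(jd)) + (X^(2^(jd)) + X). *)
Lemma dvdp_frobenius_poly d m : (d %| m)%N ->
  ('X^(2 ^ d) - 'X : {poly F}) %| 'X^(2 ^ m) - 'X.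
Proof.
have chP : 2 \in [pchar {poly F}] by rewrite pchar_poly.
case/dvdnP=> j ->; rewrite !(GRing.subr_pchar2 chP); elim: j => [|j IHj].
  by rewrite mul0n expn0 expr1 (addrr_pchar2 chP) dvdp0.
have -> : 'X^(2 ^ (j.+1 * d)) + 'X
    = ('X^(2 ^ d) + 'X) ^+ (2 ^ (j * d)) + ('X^(2 ^ (j * d)) + 'X) :> {poly F}.
  by rewrite mulSn expnD exprM (frobD chP) addrA (addrK_pchar2 chP).
by rewrite dvdp_add // dvdp_exp // expn_gt0.
Qed.

End FrobeniusPolynomial.

Section FiniteFieldCharTwo.
Variables (F : finFieldType) (n : nat).
Hypothesis cardF : #|F| = (2 ^ n)%N.

Let ch2 : 2 \in [pchar F]. Proof. exact: card_finPcharP cardF isT. Qed.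
Let n_gt0 : (0 < n)%N. Proof. by move: (finNzRing_gt1 F); rewrite cardF; case: n. Qed.

Definition frob_fixed (e : nat) (t : F) : bool := t ^+ (2 ^ e) == t.

Lemma frob_fixedD a b t :
  frob_fixed a t -> frob_fixed (a + b) t = frob_fixed b t.
Proof. by rewrite /frob_fixed expnD exprM => /eqP ->. Qed.

Lemma frob_fixedM j a t : frob_fixed a t -> frob_fixed (j * a) t.
Proof.
move=> fa; elim: j => [|j IHj]; first by rewrite mul0n /frob_fixed expr1.
by rewrite mulSn frob_fixedD.
Qed.

Lemma frob_fixed_card t : frob_fixed n t.
Proof. by rewrite /frob_fixed -cardF expf_card. Qed.

(* The exponents e with t^(2^e) = t form a submonoid of N closed under
   differences, so by Bezout they are determined by gcd(n, e). *)
Lemma frob_fixed_gcd k t : frob_fixed k t = frob_fixed (gcdn n k) t.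
Proof.
apply/idP/idP => [fk | fd]; last first.
  by rewrite -(divnK (dvdn_gcdr n k)) frob_fixedM.
have [a _ /dvdnP [j Bez]] := Bezoutl k n_gt0.
have : frob_fixed (gcdn n k + a * k) t by rewrite Bez frob_fixedM ?frob_fixed_card.
by rewrite addnC frob_fixedD // frob_fixedM.
Qed.

(* For d | n, X^(2^d) - X divides X^|F| - X = prod_x (X - x), a product of
   distinct linear factors, hence it has exactly 2^d roots in F. *)
Lemma card_frob_fixed d : (d %| n)%N -> #|[pred t | frob_fixed d t]| = (2 ^ d)%N.
Proof.
move=> dvd_dn; pose p : {poly F} := 'X^(2 ^ d) - 'X.
have : p %| \prod_(x <- index_enum F) ('X - x%:P).
  by rewrite -finField_genPoly cardF dvdp_frobenius_poly.
case/dvdp_prod_XsubC=> m p_eq; set r := mask m _ in p_eq.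
have r_uniq : uniq r by rewrite mask_uniq ?index_enum_uniq.
have size_p : size p = (2 ^ d).+1.
  rewrite size_polyDl size_polyXn // size_polyN size_polyX ltnS.
  rewrite -[X in (X < _)%N](expn0 2) ltn_exp2l // lt0n.
  by apply: contraTneq dvd_dn => ->; rewrite dvd0n -lt0n.
have size_r : size r = (2 ^ d)%N.
  by have := eqp_size p_eq; rewrite size_p size_prod_XsubC => -[].
rewrite -size_r -(card_uniqP r_uniq); apply: eq_card => t.
by rewrite inE -root_prod_XsubC -(eqp_root p_eq) /root /p !hornerE subr_eq0.
Qed.

Lemma absTrD (x y : F) : absTr n (x + y) = absTr n x + absTr n y.
Proof. by rewrite /absTr -big_split; apply: eq_bigr => i _; rewrite frobD. Qed.

Lemma absTr_sqr (x : F) : absTr n x ^+ 2 = absTr n x.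
Proof.
rewrite -(expn1 2) /absTr frob_sum //; under eq_bigr do rewrite -exprM -expnSr.
case: n cardF n_gt0 => // m cardFm _.
rewrite big_ord_recr big_ord_recl /= -cardFm expf_card addrC.
by congr (_ + _); apply: eq_bigr.
Qed.

Lemma absTr_bool (x : F) : (absTr n x == 0) || (absTr n x == 1).
Proof.
have /eqP := absTr_sqr x; rewrite expr2 -subr_eq0 -{3}[absTr n x]mulr1 -mulrBr.
by rewrite mulf_eq0 subr_eq0 eq_sym.
Qed.

Lemma exists_nonroot (p : {poly F}) :
  p != 0 -> (size p <= #|F|)%N -> exists x, ~~ root p x.
Proof.
move=> p_neq0 size_p; apply/existsP; rewrite -negb_forall; apply/negP.
move/forallP=> all_roots.
have /allP/(max_poly_roots p_neq0) : {in enum F, forall x, root p x}.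
  by move=> x _; apply: all_roots.
by rewrite enum_uniq -cardE ltnNge size_p => /(_ isT).
Qed.

(* The trace is not identically zero: the trace polynomial sum_(i<n) X^(2^i)
   is nonzero (its coefficient of X^(2^(n-1)) is 1) of degree 2^(n-1) < #|F|. *)
Lemma exists_absTr1 : exists u : F, absTr n u = 1.
Proof.
pose T : {poly F} := \sum_(i < n) 'X^(2 ^ i).
have T_neq0 : T != 0.
  apply/eqP=> /(congr1 (fun q : {poly F} => q`_(2 ^ n.-1)%N)) /eqP.
  rewrite coef0 coef_sum; case: n n_gt0 => // m _ /=.
  rewrite (bigD1 ord_max) //= coefXn eqxx big1 ?addr0 ?oner_eq0 // => i ne_i_max.
  by move: ne_i_max; rewrite coefXn eqn_exp2l // eq_sym -val_eqE => /negbTE ->.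
have size_T : (size T <= #|F|)%N.
  apply: (big_ind (fun q : {poly F} => size q <= #|F|)%N); rewrite ?size_poly0 //.
    by move=> q1 q2 le1 le2; apply: leq_trans (size_polyD _ _) _; rewrite geq_max le1.
  by move=> i _; rewrite size_polyXn cardF ltn_exp2l.
have [u /negP T_u] := exists_nonroot T_neq0 size_T.
exists u; case/orP: (absTr_bool u) => /eqP // Tr_u; case: T_u.
apply/eqP; rewrite -[RHS]Tr_u horner_sum.
by apply: eq_bigr => i _; rewrite hornerXn.
Qed.

Definition chi (x : F) : int := sgnF (absTr n x).

Lemma chiD (x y : F) : chi (x + y) = chi x * chi y.
Proof.
rewrite /chi /sgnF absTrD.
case/orP: (absTr_bool x) => /eqP ->; case/orP: (absTr_bool y) => /eqP ->;
  by rewrite ?addr0 ?add0r ?eqxx ?oner_eq0 ?(addrr_pchar2 ch2) ?eqxx.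
Qed.

Lemma chi0 : chi 0 = 1.
Proof. by rewrite /chi /sgnF /absTr big1 ?eqxx // => i _; rewrite expr0n expn_eq0. Qed.

(* A nontrivial character sums to zero: translating by u with Tr(u) = 1
   changes the sign of the sum. *)
Lemma sum_chi : \sum_(u : F) chi u = 0.
Proof.
have [u Tr_u] := exists_absTr1.
have chi_u : chi u = -1 by rewrite /chi Tr_u /sgnF oner_eq0.
have : \sum_(x : F) chi x = - \sum_(x : F) chi x.
  rewrite {1}(reindex_inj (addIr u)) -sumrN; apply: eq_bigr => x _.
  by rewrite chiD chi_u mulrN1.
by move/eqP; rewrite -addr_eq0 -mulr2n -mulr_natl mulf_eq0 => /orP[|/eqP].
Qed.

Lemma sum_chi_mul (x : F) :
  \sum_(c : F) chi (c * x) = if x == 0 then #|F|%:Z else 0.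
Proof.
have [-> | x_neq0] := eqVneq x 0.
  by under eq_bigr do rewrite mulr0 chi0; rewrite sumr_const natz.
by rewrite -[RHS]sum_chi [RHS](reindex_inj (mulIf x_neq0)).
Qed.

(* On the line y = t x, B_e(x, t x) = x^(2^e+1) (t + t^(2^e)): for x <> 0 it
   vanishes iff t^(2^e) = t. *)
Lemma polar_line e (x t : F) : x != 0 -> (polar e x (t * x) == 0) = frob_fixed e t.
Proof.
move=> x_neq0; have -> : polar e x (t * x) = x ^+ (2 ^ e) * x * (t + t ^+ (2 ^ e)).
  by rewrite /polar exprMn; ring.
rewrite mulf_eq0 mulf_eq0 expf_eq0 (negbTE x_neq0) andbF /=.
by rewrite addr_eq0 (oppr_pchar2 ch2) eq_sym.
Qed.

Variable k : nat.

Definition solution (x y z : F) : bool :=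
  [&& power_sum (2 * k) x y z == 0, power_sum k x y z == 0 & x + y + z == 0].

Definition num_solutions : nat := \sum_(x : F) \sum_(y : F) \sum_(z : F) solution x y z.

Lemma sum_solution_z (x y : F) :
  (\sum_(z : F) solution x y z = (polar (2 * k) x y == 0%R) && (polar k x y == 0%R))%N.
Proof.
rewrite (bigD1 (x + y)) //= big1 ?addn0 => [|z ne_z_xy].
  by rewrite /solution (addrr_pchar2 ch2) eqxx !(power_sum_polar ch2) andbT.
apply/eqP; rewrite eqn0Ngt lt0b /solution; apply: contraNN ne_z_xy.
by case/and3P=> _ _; rewrite addr_eq0 (oppr_pchar2 ch2) eq_sym.
Qed.

Lemma num_solutions_line (x : F) : x != 0 ->
  (\sum_(y : F) ((polar (2 * k) x y == 0%R) && (polar k x y == 0%R)) = 2 ^ gcdn n k)%N.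
Proof.
move=> x_neq0; rewrite (reindex_inj (mulIf x_neq0)) /=.
under eq_bigr => t _ do rewrite !polar_line // mul2n -addnn.
rewrite -card_frob_fixed ?dvdn_gcdl // -sum1_card [RHS]big_mkcond /=.
apply: eq_bigr => t _; rewrite inE -frob_fixed_gcd.
by case fixed_t: (frob_fixed k t); rewrite ?(frob_fixedD _ fixed_t) ?fixed_t ?andbF.
Qed.

(* x = 0 contributes q solutions, each of the q - 1 other x contributes 2^d. *)
Lemma num_solutionsE : num_solutions = (2 ^ n + (2 ^ n).-1 * 2 ^ gcdn n k)%N.
Proof.
rewrite /num_solutions; under eq_bigr do under eq_bigr do rewrite sum_solution_z.
rewrite (bigD1 0) //=; congr (_ + _)%N.
  rewrite -cardF -sum1_card; apply: eq_bigr => y _.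
  by rewrite /polar !expr0n !expn_eq0 /= !mul0r !mulr0 !addr0 eqxx.
rewrite (eq_bigr _ (fun x x_neq0 => num_solutions_line x_neq0)).
by rewrite sum_nat_cond_const cardsE cardC1 cardF.
Qed.

Lemma Sab_cube (a b c : F) :
  Sab n k a b c ^+ 3 = \sum_(x : F) \sum_(y : F) \sum_(z : F)
    chi (a * power_sum (2 * k) x y z) * chi (b * power_sum k x y z) * chi (c * (x + y + z)).
Proof.
rewrite exprS expr2 mulr_suml; apply: eq_bigr => x _.
rewrite mulr_suml mulr_sumr; apply: eq_bigr => y _.
rewrite !mulr_sumr; apply: eq_bigr => z _.
by rewrite -!chiD; congr chi; rewrite /power_sum; ring.
Qed.

Lemma sum_chi_triple (A B C : F) :
  \sum_(a : F) \sum_(b : F) \sum_(c : F) chi (a * A) * chi (b * B) * chi (c * C)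
  = #|F|%:Z ^+ 3 * [&& A == 0, B == 0 & C == 0]%:R.
Proof.
under eq_bigr do under eq_bigr do rewrite -mulr_sumr sum_chi_mul.
under eq_bigr do rewrite -mulr_suml -mulr_sumr sum_chi_mul.
rewrite -!mulr_suml sum_chi_mul.
case: (A == 0); case: (B == 0); case: (C == 0); rewrite ?mulr0 ?mul0r //=.
by rewrite mulr1 !exprS expr0 mulr1 mulrA.
Qed.

Lemma sum_Sab_cube :
  \sum_(a : F) \sum_(b : F) \sum_(c : F) Sab n k a b c ^+ 3
  = #|F|%:Z ^+ 3 * num_solutions%:R.
Proof.
under eq_bigr do under eq_bigr do under eq_bigr do rewrite Sab_cube.
rewrite exchange_triple_sums.
under eq_bigr do under eq_bigr do under eq_bigr do rewrite sum_chi_triple.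
rewrite /num_solutions natr_sum mulr_sumr; apply: eq_bigr => x _.
rewrite natr_sum mulr_sumr; apply: eq_bigr => y _.
by rewrite natr_sum mulr_sumr.
Qed.

End FiniteFieldCharTwo.

Lemma num_solutions_closed_form (n d : nat) :
  (2 ^ n + (2 ^ n).-1 * 2 ^ d)%N%:R = (2 ^ (n + d))%N%:Z + (2 ^ n)%N%:Z - (2 ^ d)%N%:Z.
Proof.
apply: (addIr (2 ^ d)%N%:Z); rewrite subrK natz -!PoszD; congr Posz.
by rewrite -addnA -mulSnr prednK ?expn_gt0 // expnD addnC.
Qed.

Theorem lemma4 (F : finFieldType) (n k : nat) :
  (0 < n)%N -> #|F| = (2 ^ n)%N -> (1 <= k)%N -> (k <= n - 1)%N ->
  \sum_(a : F) \sum_(b : F) \sum_(c : F) (Sab n k a b c) ^+ 3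
    = ((2 ^ (n + gcdn n k))%N%:Z + (2 ^ n)%N%:Z - (2 ^ gcdn n k)%N%:Z)
      * (2 ^ (3 * n))%N%:Z.
Proof.
move=> _ cardF _ _.
rewrite (sum_Sab_cube cardF) (num_solutionsE cardF) num_solutions_closed_form.
by rewrite mulrC cardF mulnC expnM -[X in _ = _ * X]natz natrX natz.
Qed.
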